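(* Let $X$ be an irreducible affine algebraic variety over an algebraically closed field $k$ whose coordinate ring $k[X]$ is factorial. Let $W$ be a finite-dimensional vector space over $k$ and $\varphi_1,\dots,\varphi_n,\psi:X\to W$ morphisms of algebraic varieties such that the set $O=\{x\in X\mid \varphi_1(x),\dots,\varphi_n(x)\text{ are linearly independent}\}$ is nonempty, while for each $x\in X$ the $n+1$ vectors $\varphi_1(x),\dots,\varphi_n(x),\psi(x)$ are linearly dependent. Then there exist $p_1,\dots,p_n,p_0\in k[X]$ with $\gcd(p_1,\dots,p_n,p_0)=1$ and $p_0(x)\psi(x)=\sum_{i=1}^n p_i(x)\varphi_i(x)$ for all $x\in X$. Moreover, for functions $h_1,\dots,h_n,h_0\in k[X]$ the equality $h_0(x)\psi(x)=\sum_{i=1}^n h_i(x)\varphi_i(x)$ holds identically on $X$ if and only if there is $g\in k[X]$ with $h_i=gp_i$ for all $i=0,1,\dots,n$. *)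

From HB Require Import structures.
From mathcomp Require Import all_boot all_order all_algebra.
Set Implicit Arguments. Unset Strict Implicit. Unset Printing Implicit Defensive.
Import Order.TTheory GRing.Theory Num.Theory.
Local Open Scope ring_scope.

Definition rdvd (A : idomainType) (d a : A) : Prop := exists c, a = d * c.

Definition irreducible_elt (A : idomainType) (a : A) : Prop :=
  a != 0 /\ a \isn't a GRing.unit /\
  forall b c : A, a = b * c -> b \is a GRing.unit \/ c \is a GRing.unit.

Definition associated (A : idomainType) (a b : A) : Prop :=
  exists u : A, u \is a GRing.unit /\ a = u * b.

Definition factorial_ring (A : idomainType) : Prop :=
  (forall a : A, a != 0 -> a \isn't a GRing.unit ->
     exists s : seq A, (forall p, p \in s -> irreducible_elt p) /\
                       a = \prod_(p <- s) p) /\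
  (forall s t : seq A,
     (forall p, p \in s -> irreducible_elt p) ->
     (forall p, p \in t -> irreducible_elt p) ->
     associated (\prod_(p <- s) p) (\prod_(p <- t) p) ->
     exists t' : seq A, perm_eq t t' /\ size t' = size s /\
       forall i, (i < size s)%N -> associated (nth 0 s i) (nth 0 t' i)).

Definition fin_gen_alg (k : fieldType) (A : idomainType)
    (iota : {rmorphism k -> A}) : Prop :=
  exists (m : nat) (g : 'I_m -> A),
    forall S : pred A,
      (forall c : k, iota c \in S) -> (forall i, g i \in S) ->
      (forall a b, a \in S -> b \in S -> a + b \in S) ->
      (forall a b, a \in S -> b \in S -> a * b \in S) ->
      forall a, a \in S.

(* Points of the affine variety X with coordinate ring A: k-algebra
   homomorphisms A -> k (Nullstellensatz, k algebraically closed). *)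
Definition is_point (k : fieldType) (A : idomainType)
    (iota : {rmorphism k -> A}) (x : {rmorphism A -> k}) : Prop :=
  forall c : k, x (iota c) = c.

(* Value at x of a morphism X -> W = k^d, given by its coordinate functions. *)
Definition evalv (k : fieldType) (A : idomainType) (d : nat)
    (x : {rmorphism A -> k}) (f : 'rV[A]_d) : 'rV[k]_d := map_mx x f.

From HB Require Import structures.
From mathcomp Require Import all_boot all_order all_algebra.
From mathcomp Require Import boolp ring zify.
Set Implicit Arguments. Unset Strict Implicit. Unset Printing Implicit Defensive.
Import Order.TTheory GRing.Theory Num.Theory.
Local Open Scope ring_scope.

(* Write Phi for the matrix with rows phi_i. At a point x0 where the phi_i are
   independent, Phi(x0) N0 = 1 for some constant matrix N0, so D := det (Phi N0)
   is a nonzero function. Wherever D(x) <> 0, psi(x) lies in the span of the rows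
   of Phi(x) and Cramer's rule gives D psi = q Phi with q := psi N0 adj(Phi N0);
   by the weak Nullstellensatz this identity holds in k[X]. Removing the common
   factors of D and the q_i in the factorial ring k[X] yields a primitive relation
   p0 psi = p Phi. For any relation h0 psi = h Phi, the row w := h0 p - p0 h has
   w Phi = 0, hence D w = w Phi N0 adj(Phi N0) = 0, so h0 p_i = p0 h_i for all i,
   and coprimality forces p0 | h0.
   The weak Nullstellensatz is proved by extending k-points of k[g_1,...,g_j] one
   generator at a time: to a root of the minimal polynomial of g_(j+1) in the
   algebraic case, and to a non-root of a given polynomial in the transcendental
   case. *)

Lemma ex_minimal_measure (T : Type) (P : T -> Prop) (m : T -> nat) :
  (exists x, P x) -> exists x, P x /\ forall y, P y -> (m x <= m y)%N.
Proof.
move=> [x0 Px0]; have exn : exists n, `[< exists x, P x /\ m x = n >].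
  by exists (m x0); apply/asboolP; exists x0.
case: (ex_minnP exn) => _ /asboolP[x [Px <-]] minx.
by exists x; split=> // y Py; apply/minx/asboolP; exists y.
Qed.

Lemma rdivp_polyOver (R : comNzRingType) (S : subringClosed R) (p q : {poly R}) :
  p \is a polyOver S -> q \is a polyOver S -> Pdiv.CommonRing.rdivp p q \is a polyOver S.
Proof.
move=> Sp Sq; rewrite /Pdiv.CommonRing.rdivp /Pdiv.CommonRing.redivp locked_withE.
rewrite /Pdiv.CommonRing.redivp_expanded_def; case: eqP => _ /=; first exact: polyOver0.
have Slc : (lead_coef q)%:P \is a polyOver S by rewrite polyOverC lead_coefE (polyOverP Sq).
suff loop n kk qq r : qq \is a polyOver S -> r \is a polyOver S ->
    ((Pdiv.CommonRing.redivp_rec q kk qq r n).1).2 \is a polyOver S.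
  by apply: loop; rewrite ?polyOver0.
elim: n kk qq r => [|n IHn] kk qq r Sqq Sr /=; case: ifP => //= _; [|apply: IHn];
  by rewrite ?rpredB ?rpredD ?rpredM // polyOverZ ?polyOverXn // lead_coefE (polyOverP Sr).
Qed.

Section FactorialRing.
Variables (A : idomainType) (hfact : factorial_ring A).

Definition factorization (a : A) (s : seq A) : Prop :=
  {in s, forall p, irreducible_elt p} /\ associated a (\prod_(p <- s) p).

Definition coprime_family (I : Type) (a : A) (p : I -> A) : Prop :=
  forall c, rdvd c a -> (forall i, rdvd c (p i)) -> c \is a GRing.unit.

Lemma associated_sym (a b : A) : associated a b -> associated b a.
Proof. by case=> u [uU ->]; exists u^-1; rewrite unitrV mulKr. Qed.

Lemma associated_trans (a b c : A) :
  associated a b -> associated b c -> associated a c.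
Proof.
by case=> u [uU ->] [v [vU ->]]; exists (u * v); rewrite unitrM uU vU mulrA.
Qed.

Lemma rdvd_prod (s : seq A) (p : A) : p \in s -> rdvd p (\prod_(q <- s) q).
Proof. by move=> sp; exists (\prod_(q <- rem p s) q); rewrite (big_rem p sp). Qed.

Lemma rdvd_trans (a b c : A) : rdvd a b -> rdvd b c -> rdvd a c.
Proof. by move=> [u ->] [v ->]; exists (u * v); rewrite mulrA. Qed.

Lemma associated_rdvd (a b : A) : associated a b -> rdvd a b.
Proof. by case=> u [uU ->]; exists u^-1; rewrite mulrAC mulrV ?mul1r. Qed.

Lemma factorization_exists (a : A) : a != 0 -> exists s, factorization a s.
Proof.
move=> a0; have [aU|aNU] := boolP (a \is a GRing.unit).
  by exists [::]; split=> //; exists a; rewrite big_nil mulr1.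
have [s [irr_s ->]] := hfact.1 a a0 aNU.
by exists s; split=> [p /irr_s|]; last by exists 1; rewrite unitr1 mul1r.
Qed.

Lemma factorization_mul (a b : A) (s t : seq A) :
  factorization a s -> factorization b t -> factorization (a * b) (s ++ t).
Proof.
move=> [irr_s [u [uU ->]]] [irr_t [v [vU ->]]]; split.
  by move=> p; rewrite mem_cat => /orP[/irr_s|/irr_t].
by exists (u * v); rewrite unitrM uU vU big_cat /=; split=> //; ring.
Qed.

Lemma factorization_size (a : A) (s t : seq A) :
  factorization a s -> factorization a t -> size s = size t.
Proof.
move=> [irr_s as_] [irr_t at_].
have [t' [tt' [<- _]]] := hfact.2 s t irr_s irr_t
  (associated_trans (associated_sym as_) at_).
by rewrite (perm_size tt').
Qed.

Lemma factorization_nil_unit (a : A) : factorization a [::] -> a \is a GRing.unit.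
Proof. by case=> _ [u [uU ->]]; rewrite big_nil mulr1. Qed.

(* Well founded since the number of irreducible factors decreases. *)
Lemma proper_divisor_ind (P : A -> Prop) :
  (forall a, a != 0 -> (forall b c, a = b * c -> b \isn't a GRing.unit -> P c) -> P a) ->
  forall a, a != 0 -> P a.
Proof.
move=> IH.
suff Psize N a s : a != 0 -> factorization a s -> (size s < N)%N -> P a.
  by move=> a a0; have [s fa] := factorization_exists a0; apply: (Psize (size s).+1 a s).
elim: N a s => // N IHN a s a0 fa ltsN.
apply: (IH _ a0) => b c def_a bNU; subst a.
move: a0; rewrite mulf_eq0 negb_or => /andP[b0 c0].
have [u fb] := factorization_exists b0; have [t fc] := factorization_exists c0.
have u_gt0 : (0 < size u)%N.
  by case: u fb => // /factorization_nil_unit bU; rewrite bU in bNU.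
apply: (IHN c t c0 fc); move: ltsN.
rewrite (factorization_size fa (factorization_mul fb fc)) size_cat; lia.
Qed.

Lemma irreducible_prime (p a b : A) :
  irreducible_elt p -> rdvd p (a * b) -> rdvd p a \/ rdvd p b.
Proof.
move=> irr_p [c def_ab].
have [->|a0] := eqVneq a 0; first by left; exists 0; rewrite mulr0.
have [->|b0] := eqVneq b 0; first by right; exists 0; rewrite mulr0.
have c0 : c != 0 by apply: contraTneq (mulf_neq0 a0 b0) => c0; rewrite def_ab c0 mulr0 eqxx.
have [s fa] := factorization_exists a0; have [t fb] := factorization_exists b0.
have [u fc] := factorization_exists c0.
have fp : factorization p [:: p].
  by split=> [q|]; [rewrite inE => /eqP-> | exists 1; rewrite unitr1 big_seq1 mul1r].
have [fab fpc] := (factorization_mul fa fb, factorization_mul fp fc).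
rewrite -def_ab in fpc.
have [t' [st' [size_t' assoc_t']]] := hfact.2 _ _ fpc.1 fab.1
  (associated_trans (associated_sym fpc.2) fab.2).
have [v [vU /= def_p]] := assoc_t' 0%N isT.
have : nth 0 t' 0 \in s ++ t by rewrite (perm_mem st') mem_nth ?size_t'.
have p_dvd_q : rdvd p (nth 0 t' 0) by apply: associated_rdvd; exists v.
rewrite mem_cat => /orP[q_s|q_t].
- left; case: fa => _ /associated_sym/associated_rdvd prod_a.
  exact: rdvd_trans p_dvd_q (rdvd_trans (rdvd_prod q_s) prod_a).
- right; case: fb => _ /associated_sym/associated_rdvd prod_b.
  exact: rdvd_trans p_dvd_q (rdvd_trans (rdvd_prod q_t) prod_b).
Qed.

Lemma exists_irreducible_dvd (a : A) : a != 0 -> a \isn't a GRing.unit ->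
  exists2 p, irreducible_elt p & rdvd p a.
Proof.
move=> a0 aNU; have [[|p s] [irr_s def_a]] := hfact.1 a a0 aNU.
  by rewrite def_a big_nil unitr1 in aNU.
exists p; first by apply: irr_s; rewrite inE eqxx.
by exists (\prod_(q <- s) q); rewrite def_a big_cons.
Qed.

Lemma common_factor_decomposition (I : Type) (D : A) (q : I -> A) : D != 0 ->
  exists G p0 (p : I -> A), [/\ D = G * p0, forall i, q i = G * p i & coprime_family p0 p].
Proof.
move=> D0; move: D D0 q; apply: proper_divisor_ind => D D0 IH q.
have [[c [[D' def_D] c_dvd_q cNU]] | no_factor] :=
  lem (exists c, [/\ rdvd c D, forall i, rdvd c (q i) & c \isn't a GRing.unit]).
  have [q' def_q] := choice c_dvd_q.
  have [G [p0 [p [def_D' def_q' cop]]]] := IH c D' def_D cNU q'.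
  by exists (c * G), p0, p; split=> [|i|//]; rewrite (def_D, def_q) (def_D', def_q') mulrA.
exists 1, D, q; split=> [|i|c cD cq]; rewrite ?mul1r //.
by apply: contrapT => cNU; apply: no_factor; exists c; split=> //; apply/negP.
Qed.

Lemma coprime_family_dvd (I : Type) (p : I -> A) (p0 h0 : A) (h : I -> A) :
  p0 != 0 -> coprime_family p0 p -> (forall i, h0 * p i = p0 * h i) -> rdvd p0 h0.
Proof.
move=> p00; move: p0 p00 h0 h; apply: proper_divisor_ind => p0 p00 IH h0 h cop eq_h.
have [p0U|p0NU] := boolP (p0 \is a GRing.unit).
  by exists (p0^-1 * h0); rewrite mulVKr.
have [pi irr_pi [r def_p0]] := exists_irreducible_dvd p00 p0NU.
have [pi0 [piNU _]] := irr_pi.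
have [i0 pi_Ndvd] : exists i0, ~ rdvd pi (p i0).
  apply: contrapT => all_dvd; move/negP: piNU; apply; apply: cop.
    by exists r.
  by move=> i; apply: contrapT => pi_Ndvd; apply: all_dvd; exists i.
have [[h0' def_h0] | //] : rdvd pi h0 \/ rdvd pi (p i0).
  by apply: irreducible_prime => //; exists (r * h i0); rewrite eq_h def_p0 mulrA.
have cop_r : coprime_family r p.
  by move=> c [z def_r] cp; apply: cop => //; exists (pi * z); rewrite def_p0 def_r mulrCA.
have eq_h' i : h0' * p i = r * h i.
  by apply: (mulfI pi0); rewrite mulrA -def_h0 eq_h def_p0 mulrA.
have [g def_h0'] := IH pi r def_p0 piNU h0' h cop_r eq_h'.
by exists g; rewrite def_h0 def_h0' def_p0 mulrA.
Qed.

End FactorialRing.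

Section AdjugateCombination.
Variables (R : comNzRingType) (n d : nat) (Phi : 'M[R]_(n, d)) (N : 'M[R]_(d, n)).

Lemma mulmx_adj_det (w : 'rV[R]_n) :
  w *m Phi *m N *m \adj (Phi *m N) = \det (Phi *m N) *: w.
Proof. by rewrite -(mulmxA w) -mulmxA mul_mx_adj mul_mx_scalar. Qed.

Lemma cramer_rule_span (psi : 'rV[R]_d) (u : 'rV[R]_n) : psi = u *m Phi ->
  \det (Phi *m N) *: psi = psi *m N *m \adj (Phi *m N) *m Phi.
Proof. by move=> def_psi; rewrite {2}def_psi mulmx_adj_det -scalemxAl -def_psi. Qed.

End AdjugateCombination.

Lemma mulmx_eq0_det (R : idomainType) n d (Phi : 'M[R]_(n, d)) (N : 'M[R]_(d, n))
    (w : 'rV[R]_n) :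
  \det (Phi *m N) != 0 -> w *m Phi = 0 -> w = 0.
Proof.
move=> det_neq0 wPhi0; apply/rowP => i; apply/eqP.
have /rowP/(_ i) := mulmx_adj_det Phi N w; rewrite wPhi0 !mul0mx !mxE.
by move/esym/eqP; rewrite mulf_eq0 (negbTE det_neq0).
Qed.

Lemma dependent_row_in_span (K : fieldType) n d (Phi : 'M[K]_(n, d)) (psi : 'rV_d) :
  row_free Phi -> ~~ row_free (col_mx Phi psi) -> exists u, psi = u *m Phi.
Proof.
move=> free_Phi; apply: contraNP => no_u; apply/inj_row_free => v.
rewrite -[v]hsubmxK mul_row_col [rsubmx v]mx11_scalar mul_scalar_mx.
set a := lsubmx v; set b := rsubmx v 0 0 => /eqP; rewrite addr_eq0 => /eqP aPhi.
have b0 : b = 0.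
  apply: contrapT => /eqP b0; apply: no_u; exists (- b^-1 *: a).
  by rewrite -scalemxAl aPhi scalerN scaleNr opprK scalerK.
move: aPhi; rewrite b0 scale0r oppr0 => /eqP; rewrite mulmx_free_eq0 // => /eqP->.
by rewrite raddf0 row_mx0.
Qed.

Section KPoints.
Variables (k : closedFieldType) (A : idomainType) (iota : {rmorphism k -> A}).

Definition kmorph_on (S : {pred A}) (y : A -> k) : Prop :=
  [/\ forall c, y (iota c) = c, {in S &, {morph y : u v / u + v}}
    & {in S &, {morph y : u v / u * v}}].

Definition points_detect (S : {pred A}) : Prop :=
  forall f, f \in S -> f != 0 -> exists2 y, kmorph_on S y & y f != 0.

Definition constants : {pred A} := [pred b | `[< exists c, b = iota c >]].

Definition adjoin (S : {pred A}) (a : A) : {pred A} :=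
  [pred b | `[< exists2 Q : {poly A}, Q \is a polyOver S & b = Q.[a] >]].

Lemma constantsP b : reflect (exists c, b = iota c) (b \in constants).
Proof. exact: asboolP. Qed.

Lemma adjoinP S a b :
  reflect (exists2 Q : {poly A}, Q \is a polyOver S & b = Q.[a]) (b \in adjoin S a).
Proof. exact: asboolP. Qed.

Lemma constants_subring_closed : subring_closed constants.
Proof.
split=> [|_ _ /constantsP[c ->] /constantsP[c' ->]|_ _ /constantsP[c ->] /constantsP[c' ->]];
  apply/constantsP; [exists 1; rewrite rmorph1 | exists (c - c'); rewrite rmorphB
                     | exists (c * c'); rewrite rmorphM] => //.
Qed.

HB.instance Definition _ :=
  GRing.isSubringClosed.Build A constants constants_subring_closed.

Lemma adjoin_subring_closed (S : subringClosed A) a : subring_closed (adjoin S a).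
Proof.
split=> [|_ _ /adjoinP[P SP ->] /adjoinP[Q SQ ->]|_ _ /adjoinP[P SP ->] /adjoinP[Q SQ ->]];
  apply/adjoinP; [exists 1; rewrite ?rpred1 ?hornerC | exists (P - Q); rewrite ?rpredB ?hornerE
                 | exists (P * Q); rewrite ?rpredM ?hornerM] => //.
Qed.

HB.instance Definition _ (S : subringClosed A) a :=
  GRing.isSubringClosed.Build A (adjoin S a) (adjoin_subring_closed S a).

Lemma adjoin_sub (S : subringClosed A) a : {subset S <= adjoin S a}.
Proof. by move=> b Sb; apply/adjoinP; exists b%:P; rewrite ?polyOverC ?hornerC. Qed.

Lemma mem_adjoin (S : {pred A}) a Q : Q \is a polyOver S -> Q.[a] \in adjoin S a.
Proof. by move=> SQ; apply/adjoinP; exists Q. Qed.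

Lemma adjoin_gen (S : subringClosed A) a : a \in adjoin S a.
Proof. by apply/adjoinP; exists 'X; rewrite ?polyOverX ?hornerX. Qed.

Lemma points_detect_constants : points_detect constants.
Proof.
have /choice[y yP] b : exists c, b \in constants -> b = iota c.
  by have [/constantsP[c ->]|] := boolP (b \in constants); [exists c | exists 0].
have y_iota c : y (iota c) = c.
  by apply: (fmorph_inj iota); rewrite -yP //; apply/constantsP; exists c.
move=> _ /constantsP[c0 ->] c00; exists y.
  by split=> // _ _ /constantsP[c ->] /constantsP[c' ->]; rewrite -(rmorphD, rmorphM) !y_iota.
by rewrite y_iota; apply: contraNneq c00 => ->; rewrite rmorph0.
Qed.

Section Extension.
Variables (S : subringClosed A) (y : A -> k).
Hypothesis hy : kmorph_on S y.

Lemma kmorph0 : y 0 = 0.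
Proof. by case: hy => y_iota _ _; rewrite -(rmorph0 iota) y_iota. Qed.

Lemma kmorphX n : {in S, {morph y : u / u ^+ n}}.
Proof.
case: hy => y_iota _ yM u Su; elim: n => [|n IHn]; first by rewrite !expr0 -(rmorph1 iota) y_iota.
by rewrite !exprS yM ?rpredX // IHn.
Qed.

Lemma kmorph_sum (I : Type) (r : seq I) (F : I -> A) :
  (forall i, F i \in S) -> y (\sum_(i <- r) F i) = \sum_(i <- r) y (F i).
Proof.
case: hy => _ yD _ SF.
suff [] : \sum_(i <- r) F i \in S /\ y (\sum_(i <- r) F i) = \sum_(i <- r) y (F i) by [].
apply: (big_ind2 (fun u v => u \in S /\ y u = v)) => [|u u' v v' [Su <-] [Sv <-]|] //.
by rewrite rpred0 kmorph0.
by rewrite rpredD // yD.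
Qed.

Lemma map_poly_kmorphC b : map_poly y b%:P = (y b)%:P.
Proof.
by apply/polyP => i; rewrite coef_map_id0 ?kmorph0 // !coefC; case: eqP; rewrite ?kmorph0.
Qed.

Lemma map_poly_kmorphD : {in polyOver S &, {morph map_poly y : P Q / P + Q}}.
Proof.
case: hy => _ yD _ P Q /polyOverP SP /polyOverP SQ; apply/polyP => i.
by rewrite coefD !coef_map_id0 ?kmorph0 // coefD yD.
Qed.

Lemma map_poly_kmorphB : {in polyOver S &, {morph map_poly y : P Q / P - Q}}.
Proof.
by move=> P Q SP SQ; rewrite -[in RHS](subrK Q P) (map_poly_kmorphD (rpredB SP SQ) SQ) addrK.
Qed.

Lemma map_poly_kmorphM : {in polyOver S &, {morph map_poly y : P Q / P * Q}}.
Proof.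
case: hy => _ _ yM P Q /polyOverP SP /polyOverP SQ; apply/polyP => i.
rewrite coef_map_id0 ?kmorph0 // !coefM kmorph_sum => [|j]; last by rewrite rpredM.
by apply: eq_bigr => j _; rewrite yM // !coef_map_id0 ?kmorph0.
Qed.

Hypothesis S_const : forall c, iota c \in S.

Lemma kmorph_extend a c :
  (forall Q, Q \is a polyOver S -> Q.[a] = 0 -> (map_poly y Q).[c] = 0) ->
  exists2 y', kmorph_on (adjoin S a) y' &
    forall Q, Q \is a polyOver S -> y' Q.[a] = (map_poly y Q).[c].
Proof.
move=> ker_a.
have /choice[rep repP] b : exists Q, b \in adjoin S a -> Q \is a polyOver S /\ b = Q.[a].
  by have [/adjoinP[Q SQ ->]|] := boolP (b \in adjoin S a); [exists Q | exists 0].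
pose y' b := (map_poly y (rep b)).[c].
have y'E Q : Q \is a polyOver S -> y' Q.[a] = (map_poly y Q).[c].
  move=> SQ; have [Srep eq_rep] := repP Q.[a] (mem_adjoin a SQ).
  apply/eqP; rewrite -subr_eq0 -hornerN -hornerD -map_poly_kmorphB //.
  by rewrite ker_a ?rpredB // hornerD hornerN -eq_rep subrr.
exists y' => //; split.
- move=> c0; rewrite -[iota c0](hornerC _ a) y'E ?polyOverC //.
  by rewrite map_poly_kmorphC hornerC; case: hy.
- move=> _ _ /adjoinP[P SP ->] /adjoinP[Q SQ ->].
  by rewrite -hornerD !y'E ?rpredD // map_poly_kmorphD ?hornerD.
- move=> _ _ /adjoinP[P SP ->] /adjoinP[Q SQ ->].
  by rewrite -hornerM !y'E ?rpredM // map_poly_kmorphM ?hornerM.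
Qed.

End Extension.

Section Adjunction.
Variables (S : subringClosed A) (a : A).
Hypothesis S_const : forall c, iota c \in S.

Lemma lead_coef_polyOver (Q : {poly A}) : Q \is a polyOver S -> lead_coef Q \in S.
Proof. by move=> /polyOverP SQ; rewrite lead_coefE. Qed.

Lemma minimal_pdvd (J : {poly A} -> Prop) (D Q : {poly A}) :
  D \is a polyOver S -> D != 0 -> Q \is a polyOver S ->
  (forall R, R \is a polyOver S -> J R -> R != 0 -> (size D <= size R)%N) ->
  (forall e T, T \is a polyOver S -> J (lead_coef D ^+ e *: Q - T * D)) ->
  exists e, exists2 T, T \is a polyOver S & lead_coef D ^+ e *: Q = T * D.
Proof.
move=> SD D0 SQ Dmin J_rem; have ST := rdivp_polyOver SQ SD.
exists (Pdiv.CommonRing.rscalp Q D), (Pdiv.CommonRing.rdivp Q D) => //.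
have def_R : Pdiv.CommonRing.rmodp Q D =
    lead_coef D ^+ Pdiv.CommonRing.rscalp Q D *: Q - Pdiv.CommonRing.rdivp Q D * D.
  by rewrite Pdiv.ComRing.rdivp_eq addrC addKr.
apply/eqP; rewrite -subr_eq0 -def_R; apply: contraTT (Pdiv.CommonRing.ltn_rmodpN0 Q D0).
move=> R0; rewrite -leqNgt Dmin // def_R; last exact: J_rem.
by rewrite rpredB ?rpredM // polyOverZ ?rpredX ?lead_coef_polyOver.
Qed.

Lemma points_detect_transcendental :
  (forall Q, Q \is a polyOver S -> Q.[a] = 0 -> Q = 0) ->
  points_detect S -> points_detect (adjoin S a).
Proof.
move=> transc detS _ /adjoinP[F SF ->] Fa0.
have F0 : F != 0 by apply: contraNneq Fa0 => ->; rewrite horner0.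
have [y hy ylc] : exists2 y, kmorph_on S y & y (lead_coef F) != 0.
  by apply: detS; rewrite ?lead_coef_polyOver ?lead_coef_eq0.
have /closed_nonrootP[c Fc] : map_poly y F != 0.
  by rewrite -size_poly_eq0 size_map_poly_id0 // size_poly_eq0.
have [|y' hy' y'E] := kmorph_extend hy S_const (a := a) (c := c).
  by move=> Q SQ /(transc Q SQ)->; rewrite map_poly0 horner0.
by exists y' => //; rewrite y'E.
Qed.

Section Algebraic.
Variable P : {poly A}.
Hypotheses (SP : P \is a polyOver S) (P0 : P != 0) (Pa : P.[a] = 0).
Hypothesis P_min :
  forall Q, Q \is a polyOver S -> Q.[a] = 0 -> Q != 0 -> (size P <= size Q)%N.

Lemma minimal_root_pdvd Q : Q \is a polyOver S -> Q.[a] = 0 ->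
  exists e, exists2 T, T \is a polyOver S & lead_coef P ^+ e *: Q = T * P.
Proof.
move=> SQ Qa; apply: (minimal_pdvd (J := fun R => R.[a] = 0)) => // e T ST.
by rewrite !hornerE Qa Pa !mulr0 subrr.
Qed.

Lemma minimal_root_coprime F : F \is a polyOver S -> F.[a] != 0 ->
  exists U V r, [/\ U \is a polyOver S, V \is a polyOver S, r \in S, r != 0
                  & U * F + V * P = r%:P].
Proof.
move=> SF Fa.
(* A member of the ideal (F, P) of minimal size pseudo-divides F and P; as P has
   minimal size among the polynomials vanishing at a, it must be a constant. *)
pose J D := exists2 U, U \is a polyOver S & exists2 V, V \is a polyOver S & D = U * F + V * P.
have J_rem D Q : D \is a polyOver S -> J D -> J Q ->
    forall e T, T \is a polyOver S -> J (lead_coef D ^+ e *: Q - T * D).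
  move=> SD [U SU [V SV def_D]] [U' SU' [V' SV' ->]] e T ST.
  have Sl : lead_coef D ^+ e \in S by rewrite rpredX ?lead_coef_polyOver.
  move: Sl; set l := lead_coef D ^+ e => Sl; rewrite def_D.
  exists (l *: U' - T * U); first by rewrite rpredB ?rpredM ?polyOverZ.
  exists (l *: V' - T * V); first by rewrite rpredB ?rpredM ?polyOverZ.
  by rewrite -!mul_polyC; ring.
have JF : J F by exists 1; rewrite ?rpred1 //; exists 0; rewrite ?rpred0 ?mul1r ?mul0r ?addr0.
have JP : J P by exists 0; rewrite ?rpred0 //; exists 1; rewrite ?rpred1 ?mul1r ?mul0r ?add0r.
have [D [[SD D0 JD] D_min]] := ex_minimal_measure (fun D : {poly A} => size D)
  (ex_intro (fun D => [/\ D \is a polyOver S, D != 0 & J D]) P (And3 SP P0 JP)).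
have {}D_min R : R \is a polyOver S -> J R -> R != 0 -> (size D <= size R)%N.
  by move=> SR JR R0; apply: D_min.
have [e1 [T1 ST1 def_P]] := minimal_pdvd SD D0 SP D_min (J_rem _ _ SD JD JP).
have [e2 [T2 ST2 def_F]] := minimal_pdvd SD D0 SF D_min (J_rem _ _ SD JD JF).
have lcD0 : lead_coef D != 0 by rewrite lead_coef_eq0.
have Da : D.[a] != 0.
  apply: contraNneq Fa => Da0; move/(congr1 (horner^~ a))/eqP: def_F.
  by rewrite /= hornerZ hornerM Da0 mulr0 mulf_eq0 expf_eq0 (negbTE lcD0) andbF => /eqP->.
have T1a : T1.[a] = 0.
  move/(congr1 (horner^~ a))/esym/eqP: def_P.
  by rewrite /= hornerZ hornerM Pa mulr0 mulf_eq0 (negbTE Da) orbF => /eqP.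
have T10 : T1 != 0.
  apply: contraNneq P0 => T10; move/eqP: def_P.
  by rewrite T10 mul0r scale_poly_eq0 expf_eq0 (negbTE lcD0) andbF.
have size_D : size D = 1%N.
  have := P_min ST1 T1a T10.
  rewrite -(size_scale _ (expf_neq0 e1 lcD0)) def_P size_mul //.
  have : (0 < size D)%N by rewrite size_poly_gt0.
  lia.
have /size_poly1P[r r0 def_D] := introT eqP size_D.
have Sr : r \in S by have := polyOverP SD 0; rewrite def_D coefC.
by case: JD => U SU [V SV eq_D]; exists U, V, r; split; rewrite // -def_D.
Qed.

Lemma points_detect_algebraic : points_detect S -> points_detect (adjoin S a).
Proof.
move=> detS _ /adjoinP[F SF ->] Fa.
(* Send a to a root c of y(P); U F + V P = r keeps y(F) nonzero at c. *)
have [U [V [r [SU SV Sr r0 def_r]]]] := minimal_root_coprime SF Fa.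
have [SlcP lcP0] : lead_coef P \in S /\ lead_coef P != 0.
  by rewrite lead_coef_polyOver ?lead_coef_eq0.
have [y hy] := detS _ (rpredM SlcP Sr) (mulf_neq0 lcP0 r0).
have [_ _ yM] := hy; rewrite yM // mulf_eq0 negb_or => /andP[ylcP yr].
have /closed_rootP[c Pc] : size (map_poly y P) != 1%N.
  rewrite size_map_poly_id0 //; apply: contraNneq P0 => /eqP/size_poly1P[b b0 def_P].
  by move: Pa; rewrite def_P hornerC => /eqP; rewrite (negbTE b0).
have [Q SQ Qa|y' hy' y'E] := kmorph_extend hy S_const (a := a) (c := c).
  have [e [T ST /(congr1 (fun R => (map_poly y R).[c]))]] := minimal_root_pdvd SQ Qa.
  rewrite -mul_polyC /= !(map_poly_kmorphM hy) ?polyOverC ?rpredX //.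
  rewrite (map_poly_kmorphC hy) !hornerE (rootP Pc) mulr0 (kmorphX hy) // => /eqP.
  by rewrite mulf_eq0 expf_eq0 (negbTE ylcP) andbF => /eqP.
exists y' => //; rewrite y'E //; apply: contra yr => /rootP yF.
move/(congr1 (fun R => (map_poly y R).[c])): def_r.
rewrite /= (map_poly_kmorphD hy) ?rpredM // !(map_poly_kmorphM hy) //.
rewrite (map_poly_kmorphC hy) !hornerE.
by rewrite yF (rootP Pc) !mulr0 addr0 => <-.
Qed.

End Algebraic.

Lemma points_detect_adjoin : points_detect S -> points_detect (adjoin S a).
Proof.
have [alg | transc] := lem (exists P, [/\ P \is a polyOver S, P != 0 & P.[a] = 0]).
  have [P [[SP P0 Pa] P_min]] := ex_minimal_measure (fun P : {poly A} => size P) alg.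
  by apply: (points_detect_algebraic SP P0 Pa) => Q SQ Qa Q0; apply: P_min.
apply: points_detect_transcendental => Q SQ Qa; apply: contrapT => /eqP Q0.
by apply: transc; exists Q.
Qed.

End Adjunction.

Fixpoint adjoin_seq (S : {pred A}) (s : seq A) : {pred A} :=
  if s is a :: s' then adjoin_seq (adjoin S a) s' else S.

Lemma adjoin_seq_subring_closed (S : subringClosed A) s :
  subring_closed (adjoin_seq S s).
Proof.
elim: s S => [|a s IHs] S /=; last exact: IHs.
by split; [exact: rpred1 | exact: rpredB | exact: rpredM].
Qed.

HB.instance Definition _ (S : subringClosed A) s :=
  GRing.isSubringClosed.Build A (adjoin_seq S s) (adjoin_seq_subring_closed S s).

Lemma adjoin_seq_sub (S : subringClosed A) s : {subset S <= adjoin_seq S s}.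
Proof. by elim: s S => [|a s IHs] S //= b /(adjoin_sub a)/IHs. Qed.

Lemma mem_adjoin_seq (S : subringClosed A) s : {subset s <= adjoin_seq S s}.
Proof.
elim: s S => [|a s IHs] S b //=; rewrite inE => /predU1P[->|/IHs//].
exact/adjoin_seq_sub/adjoin_gen.
Qed.

Lemma points_detect_adjoin_seq (S : subringClosed A) s :
  (forall c, iota c \in S) -> points_detect S -> points_detect (adjoin_seq S s).
Proof.
elim: s S => [|a s IHs] S //= S_const detS.
by apply: IHs => [c|]; [exact: adjoin_sub | exact: points_detect_adjoin].
Qed.

Theorem weak_nullstellensatz : fin_gen_alg iota ->
  forall f : A, f != 0 -> exists2 x : {rmorphism A -> k}, is_point iota x & x f != 0.
Proof.
move=> [m [g gen_g]] f f0; pose T := adjoin_seq constants (codom g).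
have T_all b : b \in T.
  apply: gen_g => [c|i|u v Tu Tv|u v Tu Tv]; rewrite ?rpredD ?rpredM //.
    by apply/adjoin_seq_sub/constantsP; exists c.
  exact/mem_adjoin_seq/codom_f.
have [|y [y_iota yD yM] yf] :=
  points_detect_adjoin_seq (s := codom g) _ points_detect_constants (T_all f) f0.
  by move=> c; apply/constantsP; exists c.
have y_nmod : nmod_morphism y.
  by split=> [|u v]; rewrite ?yD ?T_all // -(rmorph0 iota) y_iota.
have y_monoid : monoid_morphism y.
  by split=> [|u v]; rewrite ?yM ?T_all // -(rmorph1 iota) y_iota.
pose x : {rmorphism A -> k} := HB.pack y
  (GRing.isNmodMorphism.Build A k y y_nmod) (GRing.isMonoidMorphism.Build A k y y_monoid).
by exists x.
Qed.

End KPoints.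

Section PrimitiveRelation.
Variables (A : idomainType) (hfact : factorial_ring A) (n d : nat).
Variables (Phi : 'M[A]_(n, d)) (N : 'M[A]_(d, n)) (psi : 'rV[A]_d).
Hypothesis detPhiN : \det (Phi *m N) != 0.

Lemma primitive_relation c (q : 'rV[A]_n) : c != 0 -> c *: psi = q *m Phi ->
  exists p0 (p : 'I_n -> A), coprime_family p0 p /\
    forall h0 (h : 'I_n -> A), h0 *: psi = \row_i h i *m Phi <->
      exists g, h0 = g * p0 /\ forall i, h i = g * p i.
Proof.
move=> c0 rel_c.
have [G [p0 [p [def_c def_q cop]]]] := common_factor_decomposition hfact (fun i => q 0 i) c0.
have := c0; rewrite def_c mulf_eq0 negb_or => /andP[G0 p00].
have rel_p : p0 *: psi = \row_i p i *m Phi.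
  apply/rowP => j; apply: (mulfI G0); move/rowP/(_ j): rel_c.
  rewrite !mxE def_c -mulrA => ->; rewrite mulr_sumr.
  by apply: eq_bigr => i _; rewrite !mxE def_q mulrA.
exists p0, p; split=> // h0 h; split=> [rel_h | [g [-> def_h]]]; last first.
  have -> : \row_i h i = g *: \row_i p i by apply/rowP => i; rewrite !mxE def_h.
  by rewrite -scalemxAl -rel_p scalerA.
have cross i : h0 * p i = p0 * h i.
  have w0 : (h0 *: \row_i p i - p0 *: \row_i h i) *m Phi = 0.
    by rewrite mulmxBl -!scalemxAl -rel_p -rel_h !scalerA mulrC subrr.
  by move/rowP/(_ i)/eqP: (mulmx_eq0_det detPhiN w0); rewrite !mxE subr_eq0 => /eqP.
have [g def_h0] := coprime_family_dvd hfact p00 cop cross.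
exists g; split=> [|i]; first by rewrite def_h0 mulrC.
by apply: (mulfI p00); rewrite -cross def_h0 mulrA.
Qed.

End PrimitiveRelation.

Section PointwiseRelations.
Variables (k : closedFieldType) (A : idomainType) (iota : {rmorphism k -> A}).
Hypothesis hfg : fin_gen_alg iota.

Lemma row_eq0_on_principal_open (D : A) m (w : 'rV[A]_m) : D != 0 ->
  (forall x : {rmorphism A -> k}, is_point iota x -> x D != 0 -> map_mx x w = 0) -> w = 0.
Proof.
move=> D0 w_vanish; apply/rowP => j; rewrite mxE; apply: contrapT => /eqP wj0.
have [x px] := weak_nullstellensatz hfg (mulf_neq0 D0 wj0).
rewrite rmorphM mulf_eq0 negb_or => /andP[xD /negP]; apply.
by have /rowP/(_ j) := w_vanish x px xD; rewrite !mxE => ->.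
Qed.

Lemma map_mx_point (x : {rmorphism A -> k}) m m' (B : 'M[k]_(m, m')) :
  is_point iota x -> map_mx x (map_mx iota B) = B.
Proof. by move=> px; apply/matrixP => i j; rewrite !mxE px. Qed.

Variables (d n : nat) (phi : 'I_n -> 'rV[A]_d) (psi : 'rV[A]_d).
Local Notation Phi := (\matrix_(i < n) phi i).

Lemma evalv_matrix (x : {rmorphism A -> k}) :
  \matrix_(i < n) evalv x (phi i) = map_mx x Phi.
Proof. by apply/matrixP => i j; rewrite !mxE. Qed.

Lemma evalv_relationE (x : {rmorphism A -> k}) h0 (h : 'I_n -> A) :
  (x h0 *: evalv x psi = \sum_(i < n) x (h i) *: evalv x (phi i)) <->
  map_mx x (h0 *: psi - \row_i h i *m Phi) = 0.
Proof.
have -> : \sum_(i < n) x (h i) *: evalv x (phi i) = map_mx x (\row_i h i *m Phi).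
  rewrite map_mxM mulmx_sum_row; apply: eq_bigr => i _.
  by rewrite -map_row rowK !mxE.
rewrite map_mxB map_mxZ; split=> [->|/eqP]; first exact: subrr.
by rewrite subr_eq0 => /eqP.
Qed.

Lemma pointwise_relationP h0 (h : 'I_n -> A) :
  (forall x : {rmorphism A -> k}, is_point iota x ->
     x h0 *: evalv x psi = \sum_(i < n) x (h i) *: evalv x (phi i)) <->
  h0 *: psi = \row_i h i *m Phi.
Proof.
split=> [rel_x | rel x px]; last by apply/evalv_relationE; rewrite rel subrr map_mx0.
apply/eqP; rewrite -subr_eq0; apply/eqP/(row_eq0_on_principal_open (oner_neq0 A)).
by move=> x px _; apply/evalv_relationE/rel_x.
Qed.

Lemma adjugate_relation :
  (exists x : {rmorphism A -> k}, is_point iota x /\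
     row_free (\matrix_(i < n) evalv x (phi i))) ->
  (forall x : {rmorphism A -> k}, is_point iota x ->
     ~~ row_free (col_mx (\matrix_(i < n) evalv x (phi i)) (evalv x psi))) ->
  exists N : 'M[A]_(d, n), \det (Phi *m N) != 0 /\
    \det (Phi *m N) *: psi = psi *m N *m \adj (Phi *m N) *m Phi.
Proof.
move=> [x0 [px0]]; rewrite evalv_matrix => /row_freeP[N0 PhiN0] dep.
exists (map_mx iota N0).
have det_x x : is_point iota x ->
    x (\det (Phi *m map_mx iota N0)) = \det (map_mx x Phi *m N0).
  by move=> px; rewrite -det_map_mx map_mxM map_mx_point.
have D0 : \det (Phi *m map_mx iota N0) != 0.
  apply/eqP => D0; have := det_x x0 px0.
  by rewrite PhiN0 det1 D0 rmorph0 => /eqP; rewrite eq_sym oner_eq0.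
split=> //; apply/eqP; rewrite -subr_eq0; apply/eqP/(row_eq0_on_principal_open D0).
move=> x px; rewrite det_x // => xD.
have free_x : row_free (map_mx x Phi).
  by apply/inj_row_free => v; apply: mulmx_eq0_det xD.
have := dep x px; rewrite evalv_matrix => /(dependent_row_in_span free_x)[u def_u].
rewrite map_mxB map_mxZ !map_mxM map_mx_adj map_mxM map_mx_point // det_x //.
by rewrite -(cramer_rule_span N0 def_u) subrr.
Qed.

End PointwiseRelations.

Theorem lemma3p3 (k : closedFieldType) (A : idomainType)
  (iota : {rmorphism k -> A})
  (hfg : fin_gen_alg iota) (hfact : factorial_ring A)
  (d n : nat) (phi : 'I_n -> 'rV[A]_d) (psi : 'rV[A]_d)
  (hO : exists x : {rmorphism A -> k}, is_point iota x /\
          row_free (\matrix_(i < n) evalv x (phi i)))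
  (hdep : forall x : {rmorphism A -> k}, is_point iota x ->
          ~~ row_free (col_mx (\matrix_(i < n) evalv x (phi i)) (evalv x psi))) :
  exists (p0 : A) (p : 'I_n -> A),
    (forall c : A, rdvd c p0 -> (forall i, rdvd c (p i)) -> c \is a GRing.unit) /\
    (forall x : {rmorphism A -> k}, is_point iota x ->
       x p0 *: evalv x psi = \sum_(i < n) x (p i) *: evalv x (phi i)) /\
    (forall (h0 : A) (h : 'I_n -> A),
       (forall x : {rmorphism A -> k}, is_point iota x ->
          x h0 *: evalv x psi = \sum_(i < n) x (h i) *: evalv x (phi i))
       <-> exists g : A, h0 = g * p0 /\ forall i, h i = g * p i).
Proof.
have [N [D0 rel_D]] := adjugate_relation hfg hO hdep.
have [p0 [p [cop rel_iff]]] := primitive_relation hfact D0 D0 rel_D.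
have rel_pt := pointwise_relationP hfg phi psi.
exists p0, p; split=> //; split=> [|h0 h]; last by rewrite rel_pt rel_iff.
apply/(rel_pt p0 p)/rel_iff; exists 1; split=> [|i]; by rewrite mul1r.
Qed.
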